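(* Let $n\ge3$ and let $c\in\mathbb{Z}_{\ge0}^n$ be an SR state on $K_n^0$ with $\max_i c_i<n-1$. Let $a\in[n]$ be an index with $c_a=\max_i c_i$, and $b\in[n]\setminus\{a\}$ an index with $c_b=\max_{i\ne a}c_i$. Define $c'$ by $c'_a=c_a+1$, $c'_b=c_b-1$ and $c'_i=c_i$ for $i\notin\{a,b\}$. Then $c'$ is an SR state on $K_n^0$ (in particular $c_b\ge1$).
   Context: $K_n^0$ is the complete graph on vertex set $\{0,1,\dots,n\}$ with sink $0$; every vertex has degree $n$. A configuration is $c\in\mathbb{Z}_{\ge0}^n$, stable if $c_i\le n-1$ for all $i$. SSM (parameter $p\in(0,1)$): an unstable vertex $i$, independently for each incident edge, sends one grain along it with probability $p$ (grains to the sink disappear), otherwise keeps it. The SSM Markov chain on stable configurations adds a grain at vertex $i$ with probability $\mu_i>0$ and then stabilises; SR = recurrent state of this chain. Known fact: a stable $c$ on $K_n^0$ is SR iff there is an orientation $\mathcal{O}$ of the complete graph $K_n$ on $\{1,\dots,n\}$ (a tournament) with $c_i\ge\mathrm{in}^{\mathcal{O}}_i$ for all $i$, where $\mathrm{in}^{\mathcal{O}}_i$ is the in-degree of $i$. *)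

From Stdlib Require Import Relations.
From mathcomp Require Import all_boot.
Set Implicit Arguments. Unset Strict Implicit. Unset Printing Implicit Defensive.

(* K_n^0: vertex set {0,...,n}, sink 0.  The non-sink vertex k (1 <= k <= n)
   is represented by the ordinal (k-1) : 'I_n.  Every vertex has degree n (adjacent to all other non-sink
   vertices and to the sink). *)
Definition config (n : nat) := 'I_n -> nat.

Definition stable (n : nat) (c : config n) : Prop := forall i, c i <= n.-1.

(* One SSM toppling event with positive probability: an unstable vertex i
   (c_i >= deg i = n) sends one grain along each edge of a chosen subset of its
   incident edges: the edges to the non-sink vertices in S (i \notin S), and
   the edge to the sink iff k = true (that grain disappears).  Every subset has
   probability p^|E|(1-p)^(n-|E|) > 0 since 0 < p < 1. *)
Definition topple_step (n : nat) (u v : config n) : Prop :=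
  exists i : 'I_n, n <= u i /\
    exists (S : {set 'I_n}) (k : bool), i \notin S /\
      forall j, v j = if j == i then u i - (#|S| + k) else u j + (j \in S).

Definition add_grain (n : nat) (c : config n) (i : 'I_n) : config n :=
  fun j => if j == i then (c j).+1 else c j.

Definition ssm_stabilises_to (n : nat) (u v : config n) : Prop :=
  clos_refl_trans (config n) (@topple_step n) u v /\ stable v.

(* positive-probability transition of the SSM Markov chain on stable
   configurations (each mu_i > 0, so every vertex can receive the grain) *)
Definition ssm_chain_step (n : nat) (c c' : config n) : Prop :=
  stable c /\ exists i : 'I_n, ssm_stabilises_to (add_grain c i) c'.

Definition ssm_reach (n : nat) := clos_refl_trans (config n) (@ssm_chain_step n).

(* SR: recurrent state of the (finite-state) SSM Markov chain, i.e. a stable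
   state c such that every state reachable from c can reach c back. *)
Definition SR (n : nat) (c : config n) : Prop :=
  stable c /\ forall d, ssm_reach c d -> ssm_reach d c.

From mathcomp Require Import all_boot zify.
From Stdlib Require Import Relations FunctionalExtensionality.
Set Implicit Arguments. Unset Strict Implicit. Unset Printing Implicit Defensive.

(* SR states are exactly the stable configurations dominating the in-degree
   sequence of some tournament on the non-sink vertices.  Domination is
   preserved by adding grains and by topplings (reorient the toppling vertex so
   that it points exactly to the neighbours it fed), and the all-(n-1) state is
   dominated by a transitive tournament; conversely, the all-(n-1) state reaches
   the in-degree sequence of any tournament by processing the vertices one at a
   time.
   Given a tournament O dominated by c, either c_b exceeds the in-degree of b
   and O also works for c', or that in-degree is saturated.  Then a reaches b
   in O: otherwise every vertex but a reaches b (a vertex that cannot reach b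
   has larger in-degree than b), all of them point into a, and c_a >= n-1.
   Reversing a simple path from a to b raises the in-degree of a by one and
   lowers that of b by one. *)

Section Tournament.

Variable T : finType.
Implicit Types (O : rel T) (c : T -> nat) (A S : {set T}).

Definition tournament O := irreflexive O /\ forall u v, u != v -> O v u = ~~ O u v.

Definition indeg O v := #|[set u | O u v]|.

Definition tournament_dominated c :=
  exists2 O, tournament O & forall v, indeg O v <= c v.

Lemma indeg_le_pred O v : irreflexive O -> indeg O v <= #|T|.-1.
Proof.
move=> Oirr; rewrite -(cardsC1 v); apply/subset_leq_card/subsetP => u.
by rewrite !inE; apply: contraTneq => ->; rewrite Oirr.
Qed.

Lemma tournament_card_split O A v : tournament O -> v \notin A ->
  #|[set u in A | O u v]| + #|[set u in A | O v u]| = #|A|.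
Proof.
case=> _ Otot vA; rewrite -(cardsID [set u | O u v] A); congr (_ + _).
  by apply: eq_card => u; rewrite !inE andbC.
apply: eq_card => u; rewrite !inE; case uA: (u \in A); rewrite ?andbT ?andbF //.
by rewrite Otot //; apply: contraNneq vA => <-.
Qed.

Lemma tournament_dominated_le c c' :
  (forall v, c v <= c' v) -> tournament_dominated c -> tournament_dominated c'.
Proof. by move=> le_cc' [O tO dO]; exists O => // v; apply: leq_trans (le_cc' v). Qed.

Lemma tournament_dominated_full : tournament_dominated (fun=> #|T|.-1).
Proof.
have tO : tournament [rel x y | enum_rank x < enum_rank y].
  split=> [x|x y]; first exact: ltnn.
  by rewrite -(inj_eq enum_rank_inj) -val_eqE /=; case: ltngtP.
by exists [rel x y | enum_rank x < enum_rank y] => // v; apply: indeg_le_pred; case: tO.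
Qed.

Definition redirect O i S : rel T :=
  fun x y => if x == i then y \in S else if y == i then x \notin S else O x y.

Lemma redirect_tournament O i S : tournament O -> i \notin S -> tournament (redirect O i S).
Proof.
case=> Oirr Otot iS; split=> [x|x y xy]; rewrite /redirect.
  by case: eqP => [->|_]; [exact: negbTE | exact: Oirr].
case: (eqVneq x i) => [exi|xi]; case: (eqVneq y i) => [eyi|yi] //.
- by move: xy; rewrite exi eyi eqxx.
- by rewrite negbK.
- exact: Otot.
Qed.

Lemma indeg_redirect_self O i S : i \notin S -> indeg (redirect O i S) i = #|T| - #|S|.+1.
Proof.
move=> iS; rewrite /indeg (_ : [set _ | _] = ~: (i |: S)).
  by rewrite cardsCs setCK cardsU1 iS.
by apply/setP => x; rewrite !inE /redirect eqxx; case: eqP => [->|]; rewrite ?(negbTE iS).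
Qed.

Lemma indeg_redirect_le O i S v : v != i -> indeg (redirect O i S) v <= indeg O v + (v \in S).
Proof.
move=> vi; rewrite /indeg (cardsD1 i) addnC inE /redirect eqxx leq_add2r.
apply/subset_leq_card/subsetP => x; rewrite !inE /redirect (negbTE vi).
by case: eqP.
Qed.

Definition reverse_arc O x z : rel T :=
  fun u v => O u v (+) ((u == x) && (v == z) || (u == z) && (v == x)).

Lemma reverse_arc_tournament O x z : tournament O -> O x z -> tournament (reverse_arc O x z).
Proof.
case=> Oirr Otot Oxz; have xz : x != z by apply: contraTneq Oxz => ->; rewrite Oirr.
split=> [u|u v uv]; rewrite /reverse_arc.
  by rewrite Oirr; case: (eqVneq u x) => [->|_]; rewrite ?(negbTE xz) ?andbF.
by rewrite Otot // addNb orbC [(v == x) && _]andbC [(v == z) && _]andbC.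
Qed.

Lemma indeg_reverse_arc O x z v : tournament O -> O x z ->
  indeg (reverse_arc O x z) v + (v == z) = indeg O v + (v == x).
Proof.
case=> Oirr Otot Oxz; have xz : x != z by apply: contraTneq Oxz => ->; rewrite Oirr.
rewrite /indeg /reverse_arc; case: (eqVneq v z) => [->|vz].
  rewrite eq_sym (negbTE xz) (cardsD1 x [set u | O u z]) inE Oxz addn0 addnC.
  congr (_ + _); apply: eq_card => u; rewrite !inE andbT andbF orbF.
  by case: eqP => [->|]; rewrite ?Oxz ?addbF.
case: (eqVneq v x) => [->|vx]; last first.
  by congr (_ + _); apply: eq_card => u; rewrite !inE !andbF addbF.
rewrite (_ : [set u | _] = z |: [set u | O u x]).
  by rewrite cardsU1 inE (Otot _ _ xz) Oxz; lia.
apply/setP => u; rewrite !inE andbF andbT.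
by case: eqP => [->|]; rewrite ?(Otot _ _ xz) ?Oxz ?addbF.
Qed.

Lemma reverse_arc_path O x z y p :
  x \notin y :: p -> path O y p -> path (reverse_arc O x z) y p.
Proof.
move=> xp; apply: (sub_in_path (P := predC (pred1 x))); last first.
  by rewrite all_predC has_pred1.
by move=> u v /[!inE] ux vx Ouv; rewrite /reverse_arc Ouv (negbTE ux) (negbTE vx) !andbF.
Qed.

Lemma reverse_path_indeg O x p : tournament O -> path O x p -> uniq (x :: p) ->
  exists2 O', tournament O' & forall v, indeg O' v + (v == last x p) = indeg O v + (v == x).
Proof.
elim: p O x => [|z p IHp] O x tO /=; first by exists O.
case/andP=> Oxz zp /andP[xzp uzp].
have [O' tO' indegO'] := IHp _ z (reverse_arc_tournament tO Oxz) (reverse_arc_path z xzp zp) uzp.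
exists O' => // v; have := indeg_reverse_arc v tO Oxz; have := indegO' v; lia.
Qed.

Lemma indeg_lt_card_connect O b : irreflexive O -> indeg O b < #|[set x | connect O x b]|.
Proof.
move=> Oirr; rewrite (cardsD1 b) inE connect0 add1n ltnS.
apply/subset_leq_card/subsetP => x; rewrite !inE => Oxb.
by rewrite (connect1 Oxb) andbT; apply: contraTneq Oxb => ->; rewrite Oirr.
Qed.

Lemma card_connect_le_indeg O y b : tournament O -> ~~ connect O y b ->
  #|[set x | connect O x b]| <= indeg O y.
Proof.
case=> _ Otot nyb; apply/subset_leq_card/subsetP => x; rewrite !inE => xb.
have xy : x != y by apply: contraNneq nyb => <-.
apply: contraR nyb => nOxy; apply: connect_trans xb.
by apply: connect1; rewrite Otot.
Qed.

Lemma connect_to_saturated O c a b : tournament O -> (forall v, indeg O v <= c v) ->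
  c a < #|T|.-1 -> (forall y, y != a -> c y <= c b) -> c b <= indeg O b -> connect O a b.
Proof.
move=> tO dO ca cb bsat; apply: contraT => nab.
have indeg_b := indeg_lt_card_connect b tO.1.
have reach_b : [set~ a] \subset [set x | connect O x b].
  apply/subsetP => y /[!inE] ya; apply: contraT => nyb.
  have := card_connect_le_indeg tO nyb; have := dO y; have := cb y ya; lia.
have := subset_leq_card reach_b; have := card_connect_le_indeg tO nab.
by rewrite cardsC1; have := dO a; lia.
Qed.

Lemma tournament_dominated_shift c a b :
  tournament_dominated c -> c a < #|T|.-1 -> b != a -> (forall y, y != a -> c y <= c b) ->
  0 < c b /\
  tournament_dominated (fun v => if v == a then (c a).+1 else if v == b then (c b).-1 else c v).
Proof.
case=> O tO dO ca ba cb.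
have [lt_b | sat_b] := ltnP (indeg O b) (c b).
  split; first exact: leq_ltn_trans lt_b.
  exists O => // v; have := dO v.
  by case: eqP => [->|_]; [lia | case: eqP => [->|_]; lia].
have [p pO] := connectP (connect_to_saturated tO dO ca cb sat_b).
case: (shortenP pO) => p' p'O up' _ last_b.
have [O' tO' dO'] := reverse_path_indeg tO p'O up'; rewrite -last_b in dO'.
have := dO' b; rewrite eqxx (negbTE ba) => indeg_b.
split; first by have := dO b; lia.
exists O' => // v; have := dO' v; have := dO v.
case: (eqVneq v a) => [->|va]; first by rewrite eq_sym (negbTE ba); lia.
by case: (eqVneq v b) => [->|vb]; lia.
Qed.

Lemma card_compl_setD1 (F : {set T}) h (P : pred T) : h \in F ->
  #|[set u in ~: (F :\ h) | P u]| = P h + #|[set u in ~: F | P u]|.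
Proof.
move=> hF; rewrite (cardsD1 h) !inE eqxx /=; congr (_ + _).
by apply: eq_card => u; rewrite !inE; case: eqP => [->|_]; rewrite ?hF.
Qed.

End Tournament.

Section SSM.

Variable n : nat.
Implicit Types (u v c : config n) (O : rel 'I_n) (F : {set 'I_n}).

Lemma tournament_dominated_topple u v :
  topple_step u v -> tournament_dominated u -> tournament_dominated v.
Proof.
case=> i [ui [S [k [iS hv]]]] [O tO dO].
exists (redirect O i S); first exact: redirect_tournament.
move=> j; rewrite hv; case: (eqVneq j i) => [->|ji].
  rewrite indeg_redirect_self // card_ord; apply: leq_trans (leq_sub2r _ ui) (leq_sub2l _ _).
  by rewrite -addn1 leq_add2l leq_b1.
by apply: leq_trans (indeg_redirect_le O S ji) _; rewrite leq_add2r.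
Qed.

Lemma topples_dominated u v : clos_refl_trans _ (@topple_step n) u v ->
  tournament_dominated u -> tournament_dominated v.
Proof.
by elim=> [x y /tournament_dominated_topple | // | x y z _ IHxy _ IHyz /IHxy/IHyz].
Qed.

Lemma ssm_reach_dominated u v : ssm_reach u v ->
  tournament_dominated u -> tournament_dominated v.
Proof.
elim=> [x y [_ [i [topples _]]] | // | x y z _ IHxy _ IHyz /IHxy/IHyz //].
move/(tournament_dominated_le (c' := add_grain x i)) => td_grain.
apply: topples_dominated topples (td_grain _) => j.
by rewrite /add_grain; case: eqP.
Qed.

Lemma ssm_reach_stable u v : stable u -> ssm_reach u v -> stable v.
Proof. by move=> su uv; elim: uv su => [x y [_ [i []]] | // | x y z _ IHxy _ IHyz /IHxy/IHyz]. Qed.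

Lemma ssm_reach_le u v : stable v -> (forall i, u i <= v i) -> ssm_reach u v.
Proof.
move=> sv; move Ed: (\sum_i (v i - u i)) => d.
elim: d u Ed => [|d IHd] u Ed uv.
  have -> : u = v; last exact: rt_refl.
  apply: functional_extensionality => i; apply/eqP; rewrite eqn_leq uv -subn_eq0 /=.
  by rewrite -leqn0 -Ed (bigD1 i) //= leq_addr.
have [i lt_uv] : exists i, u i < v i.
  apply/existsP; apply: contraT => /existsPn le_vu; move: Ed; rewrite big1 // => j _.
  by apply/eqP; rewrite subn_eq0 leqNgt le_vu.
have grain_le j : add_grain u i j <= v j by rewrite /add_grain; case: eqP => [->|].
apply: rt_trans (rt_step _ _ _ _ _) (IHd (add_grain u i) _ grain_le).
  split=> [j|]; first exact: leq_trans (uv j) (sv j).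
  by exists i; split=> [|j]; [exact: rt_refl | exact: leq_trans (grain_le j) (sv j)].
rewrite (bigD1 i) //= /add_grain eqxx; under eq_bigr => j ji do rewrite (negbTE ji).
by move: Ed; rewrite (bigD1 i) //=; lia.
Qed.

Lemma topple_to_sink (s : seq 'I_n) u v : uniq s -> {in s, forall x, u x = n} ->
  (forall j, v j = if j \in s then n.-1 else u j) -> clos_refl_trans _ (@topple_step n) u v.
Proof.
elim: s u => [|x s IHs] u /=.
  move=> _ _ hv; have -> : v = u by apply: functional_extensionality => j; rewrite hv.
  exact: rt_refl.
case/andP=> xs us un hv; have ux := un x (mem_head x s).
pose u1 j := if j == x then n.-1 else u j.
apply: rt_trans (rt_step _ _ _ _ _) (IHs u1 us _ _).
- exists x; split; first by rewrite ux.
  exists set0, true; split=> [|j]; first by rewrite inE.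
  by rewrite /u1 cards0 in_set0 ux; case: (j == x) => /=; lia.
- move=> y ys; rewrite /u1; case: eqP => [exy|_]; first by rewrite -exy ys in xs.
  by apply: un; rewrite inE ys orbT.
- by move=> j; rewrite hv /u1 inE; case: eqP => //= _; rewrite if_same.
Qed.

Definition stage O F : config n :=
  fun j => if j \in F then n.-1 else #|[set x in ~: F | O x j]|.

Lemma stage_stable O F : irreflexive O -> stable (stage O F).
Proof.
move=> Oirr j; rewrite /stage; case: ifP => // _.
have := indeg_le_pred j Oirr; rewrite card_ord; apply: leq_trans.
by apply/subset_leq_card/subsetP => x; rewrite !inE => /andP[].
Qed.

(* Add a grain at h and topple it into F :\ h, into its out-neighbours outside F
   and into the sink; each vertex of F :\ h then holds n grains and loses one to
   the sink. *)
Lemma ssm_chain_step_stage O F h : tournament O -> h \in F ->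
  ssm_chain_step (stage O F) (stage O (F :\ h)).
Proof.
move=> tO hF; have n_gt0 : 0 < n by apply: leq_ltn_trans (ltn_ord h).
split; first exact: stage_stable tO.1.
exists h; split; last exact: stage_stable tO.1.
set u0 := add_grain (stage O F) h.
have u0h : u0 h = n by rewrite /u0 /add_grain eqxx /stage hF prednK.
set S := (F :\ h) :|: [set x in ~: F | O h x].
pose u1 j := if j == h then u0 h - (#|S| + true) else u0 j + (j \in S).
apply: (@rt_trans _ _ _ u1); first apply: rt_step.
  exists h; split; first by rewrite u0h.
  by exists S, true; split; rewrite // !inE eqxx hF.
apply: (@topple_to_sink (enum (F :\ h))); first exact: enum_uniq.
  move=> x /[!mem_enum] /[!inE] /andP[xh xF].
  by rewrite /u1 (negbTE xh) /u0 /add_grain (negbTE xh) /stage xF !inE xh xF addn1 prednK.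
move=> j; rewrite mem_enum /stage; case: ifP => // jFh; rewrite /u1.
case: (eqVneq j h) => [->|jh].
  rewrite card_compl_setD1 // (tO.1 h) add0n u0h.
  have := tournament_card_split tO (_ : h \notin ~: F); rewrite inE hF => /(_ isT).
  have := cardsC F; have := cardsD1 h F; rewrite hF card_ord.
  have -> : #|S| = #|F :\ h| + #|[set x in ~: F | O h x]|.
    rewrite -cardsUI (_ : _ :&: _ = set0) ?cards0 ?addn0 //.
    by apply/setP => x; rewrite !inE; case: (x \in F); rewrite ?andbF.
  (* The [set]s merge cardinals that differ only in invisible instance wrappers,
     which [lia] would otherwise treat as distinct atoms. *)
  set a1 := #|[set x in ~: F | O x h]|; set a2 := #|[set x in ~: F | O h x]|.
  set f := #|F|; set f1 := #|F :\ h|; set fc := #|~: F|.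
  rewrite /=; lia.
have jF : j \notin F by move: jFh; rewrite !inE jh => /negbT.
rewrite /u0 /add_grain (negbTE jh) /stage (negbTE jF) card_compl_setD1 // addnC.
by rewrite !inE (negbTE jh) (negbTE jF).
Qed.

Lemma ssm_reach_stage O F : tournament O -> ssm_reach (stage O F) (stage O set0).
Proof.
move=> tO; elim: {F}_.+1 {-2}F (ltnSn #|F|) => // m IHm F.
case: (set_0Vmem F) => [-> _ | [h hF] ltFm]; first exact: rt_refl.
apply: rt_trans (rt_step _ _ _ _ (ssm_chain_step_stage tO hF)) (IHm _ _).
by rewrite (cardsD1 h F) hF in ltFm.
Qed.

Lemma tournament_dominated_reach c : stable c -> tournament_dominated c ->
  ssm_reach (fun=> n.-1) c.
Proof.
move=> sc [O tO dO].
apply: (@rt_trans _ _ _ (stage O setT)).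
  by apply: ssm_reach_le (stage_stable _ tO.1) _ => j; rewrite /stage inE.
apply: rt_trans (ssm_reach_stage _ tO) (ssm_reach_le sc _) => j.
rewrite /stage inE; apply: leq_trans (dO j).
by apply/subset_leq_card/subsetP => x; rewrite !inE.
Qed.

Lemma SR_tournament_dominatedP c : SR c <-> stable c /\ tournament_dominated c.
Proof.
have full_stable : stable (fun _ : 'I_n => n.-1) by [].
split=> [[sc recurrent] | [sc tdc]].
  split=> //; apply: ssm_reach_dominated (recurrent _ (ssm_reach_le full_stable sc)) _.
  by have := tournament_dominated_full 'I_n; rewrite card_ord.
split=> // d cd; apply: rt_trans (tournament_dominated_reach sc tdc).
exact: ssm_reach_le full_stable (ssm_reach_stable sc cd).
Qed.

End SSM.

Theorem lemma4p4 (n : nat) (c : 'I_n -> nat) (a b : 'I_n) :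
  3 <= n ->
  SR c ->
  \max_(i < n) c i < n.-1 ->
  c a = \max_(i < n) c i ->
  b != a ->
  c b = \max_(i < n | i != a) c i ->
  1 <= c b /\
  SR (fun i : 'I_n => if i == a then (c a).+1
                      else if i == b then (c b).-1 else c i).
Proof.
move=> _ /SR_tournament_dominatedP[sc tdc] max_lt ca ba cb.
have b_max y : y != a -> c y <= c b.
  by rewrite cb; apply: (leq_bigmax_cond (P := fun i => i != a)).
have ca_lt : c a < #|'I_n|.-1 by rewrite card_ord ca.
have [cb_gt0 tdc'] := tournament_dominated_shift tdc ca_lt ba b_max.
split=> //; apply/SR_tournament_dominatedP; split=> // i.
case: eqP => _; first by rewrite ca.
by case: eqP => _; [apply: leq_trans (leq_pred _) (sc b) | apply: sc].
Qed.
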